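(* Let $G$ be a connected graph and let $G'$ be the graph obtained from $G$ by adding a new vertex adjacent to all vertices of $G$. Then $G$ is connected-domishold if and only if $G'$ is connected-domishold.
   Context: A connected dominating set (CD set) of a connected graph $G$ is a set $S\subseteq V(G)$ such that every vertex not in $S$ has a neighbor in $S$ and $G[S]$ is connected. A graph $G=(V,E)$ is connected-domishold if there exist $w:V\to\mathbb{R}_{\ge0}$ and $t\in\mathbb{R}_{\ge0}$ such that for every $S\subseteq V$, $\sum_{x\in S}w(x)\ge t$ iff $S$ is a CD set of $G$. *)

From HB Require Import structures.
From mathcomp Require Import all_boot all_order all_algebra.
Set Implicit Arguments. Unset Strict Implicit. Unset Printing Implicit Defensive.
Import Order.TTheory GRing.Theory Num.Theory.

(* A simple graph is a symmetric irreflexive relation e on a finite type T. *)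

Definition dominating (T : finType) (e : rel T) (S : {set T}) : bool :=
  [forall x, (x \notin S) ==> [exists y in S, e x y]].

Definition induced_connected (T : finType) (e : rel T) (S : {set T}) : bool :=
  [forall x in S, forall y in S,
     connect (fun a b => [&& a \in S, b \in S & e a b]) x y].

Definition cd_set (T : finType) (e : rel T) (S : {set T}) : bool :=
  dominating e S && induced_connected e S.

Definition connected_graph (T : finType) (e : rel T) : bool :=
  (0 < #|T|)%N && [forall x, forall y, connect e x y].

Definition connected_domishold (R : realFieldType) (T : finType) (e : rel T) : Prop :=
  exists (w : T -> R) (t : R),
    (forall x, 0 <= w x)%R /\ (0 <= t)%R /\
    forall S : {set T}, (t <= \sum_(x in S) w x)%R = cd_set e S.

(* G' : add a new vertex (None) adjacent to all vertices of G. *)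
Definition cone_rel (T : finType) (e : rel T) : rel (option T) :=
  fun a b => match a, b with
             | Some x, Some y => e x y
             | None, Some _ => true
             | Some _, None => true
             | None, None => false
             end.

From HB Require Import structures.
From mathcomp Require Import all_boot all_order all_algebra.
Import Order.TTheory GRing.Theory Num.Theory.

(* The CD sets of the cone G' are exactly the sets containing the apex together
   with the images of the CD sets of G: the apex dominates everything and joins
   any two vertices, while a set avoiding the apex is dominating and connected
   in G' iff it is so in G. Hence a threshold structure (w, t) for G transfers
   to G' by giving the apex weight t, and one for G' restricts to G. *)

Definition induced_rel {U : finType} (f : rel U) (S : {set U}) : rel U :=
  fun a b => [&& a \in S, b \in S & f a b].

Lemma connect_homo (T1 T2 : finType) (e1 : rel T1) (e2 : rel T2)
    (f : T1 -> T2) :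
  (forall a b, e1 a b -> e2 (f a) (f b)) ->
  forall x y, connect e1 x y -> connect e2 (f x) (f y).
Proof.
move=> hom x y /connectP [p]; elim: p x => [|z p IH] x /=; first by move=> _ ->.
case/andP=> exz pz ey.
exact: connect_trans (connect1 (hom _ _ exz)) (IH _ pz ey).
Qed.

Lemma imset_Some_preimage {T : finType} (A : {set option T}) :
  None \notin A -> Some @: [set x | Some x \in A] = A.
Proof.
move=> NA; apply/setP=> -[x|].
  by rewrite mem_imset ?inE //; apply: Some_inj.
by rewrite (negbTE NA); apply/negbTE/imsetP=> -[].
Qed.

Section Cone.

Variables (T : finType) (e : rel T).
Implicit Types (S : {set T}) (A : {set option T}).

Local Notation cone := (cone_rel e).

Lemma cone_cd_set_apex A : None \in A -> cd_set cone A.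
Proof.
move=> NA; apply/andP; split.
  apply/forallP=> x; apply/implyP=> xA; apply/existsP; exists None.
  by rewrite NA; case: x xA => //=; rewrite NA.
have to_apex a : a \in A -> connect (induced_rel cone A) a None.
  case: a => [a|] aA; last exact: connect0.
  by apply: connect1; rewrite /induced_rel aA NA.
have from_apex a : a \in A -> connect (induced_rel cone A) None a.
  case: a => [a|] aA; last exact: connect0.
  by apply: connect1; rewrite /induced_rel aA NA.
apply/forallP=> x; apply/implyP=> xA; apply/forallP=> y; apply/implyP=> yA.
exact: connect_trans (to_apex _ xA) (from_apex _ yA).
Qed.

Let mem_Some S x : (Some x \in Some @: S) = (x \in S).
Proof. by rewrite mem_imset //; apply: Some_inj. Qed.

Let apex_notin S : (None \in Some @: S) = false.
Proof. by apply/negbTE/imsetP=> -[]. Qed.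

Lemma cone_induced_connected_image S :
  induced_connected cone (Some @: S) = induced_connected e S.
Proof.
apply/forallP/forallP=> C x; apply/implyP.
- move=> xS; apply/forallP=> y; apply/implyP=> yS.
  have := C (Some x); rewrite mem_Some xS => /forallP/(_ (Some y)).
  rewrite mem_Some yS /=; apply: (@connect_homo _ _ _ _ (oapp id x)).
  by case=> [a|] [b|]; rewrite /induced_rel ?mem_Some ?apex_notin ?andbF.
- case: x => [x|]; rewrite ?mem_Some ?apex_notin // => xS.
  apply/forallP=> -[y|]; apply/implyP; rewrite ?mem_Some ?apex_notin // => yS.
  have := C x; rewrite xS => /forallP/(_ y); rewrite yS /=.
  by apply: connect_homo => a b; rewrite /induced_rel !mem_Some.
Qed.

(* With no vertex at all, the empty set would dominate G but not G'. *)
Variable x0 : T.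

Lemma cone_dominating_image S :
  dominating cone (Some @: S) = dominating e S.
Proof.
apply/forallP/forallP=> D x.
- apply/implyP=> xS; have := D (Some x); rewrite mem_Some xS /=.
  case/existsP=> -[y|]; rewrite ?mem_Some ?apex_notin // => /andP[yS exy].
  by apply/existsP; exists y; rewrite yS.
- apply/implyP; case: x => [x|]; rewrite ?mem_Some ?apex_notin => xS.
    have := D x; rewrite xS => /existsP[y /andP[yS exy]].
    by apply/existsP; exists (Some y); rewrite mem_Some yS.
  have [y yS] : exists y, y \in S.
    case: (set_0Vmem S) => [S0|[y yS]]; last by exists y.
    by have := D x0; rewrite S0 in_set0 => /existsP[y]; rewrite in_set0.
  by apply/existsP; exists (Some y); rewrite mem_Some yS.
Qed.

Lemma cone_cd_set_image S : cd_set cone (Some @: S) = cd_set e S.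
Proof.
by rewrite /cd_set cone_dominating_image cone_induced_connected_image.
Qed.

Variable R : realFieldType.

Let sum_image (w : option T -> R) S :
  (\sum_(a in Some @: S) w a = \sum_(x in S) w (Some x))%R.
Proof. by rewrite big_imset //; move=> ? ? _ _ []. Qed.

Lemma connected_domishold_cone :
  connected_domishold R e -> connected_domishold R cone.
Proof.
case=> w [t [w_ge0 [t_ge0 wtE]]].
exists (fun a => if a is Some x then w x else t), t; split; first by case.
split=> // A; have [NA | NA] := boolP (None \in A).
  rewrite cone_cd_set_apex // (bigD1 None) //= lerDl.
  by apply: sumr_ge0 => -[x|] _.
by rewrite -(imset_Some_preimage _ NA) cone_cd_set_image -wtE sum_image.
Qed.

Lemma connected_domishold_of_cone :
  connected_domishold R cone -> connected_domishold R e.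
Proof.
case=> w [t [w_ge0 [t_ge0 wtE]]].
exists (fun x => w (Some x)), t; split=> //; split=> // S.
by rewrite -cone_cd_set_image -wtE sum_image.
Qed.

End Cone.

Theorem mainTheorem3 (R : realFieldType) (T : finType) (e : rel T)
  (e_sym : symmetric e) (e_irr : irreflexive e) (G_conn : connected_graph e) :
  connected_domishold R e <-> connected_domishold R (cone_rel e).
Proof.
case/andP: G_conn => /card_gt0P[x0 _] _.
split; [exact: connected_domishold_cone _ e x0 R
       | exact: connected_domishold_of_cone _ e x0 R].
Qed.
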